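(* Let $p\ge1$, $\sigma^2>0$, $\boldsymbol\beta\in\mathbb{R}^p$ not identically zero with $\beta_1\le\cdots\le\beta_p$, $\delta_1^2,\dots,\delta_p^2>0$, $\sum_{i=1}^p\beta_i/\delta_i^2\ge0$, and $\Sigma=\sigma^2\boldsymbol\beta\boldsymbol\beta^\top+\mathrm{diag}(\delta_1^2,\dots,\delta_p^2)$. Let $w=w^L$ be the long-only minimum variance portfolio (the minimizer of $w^\top\Sigma w$ subject to $w^\top\mathbf{1}_p=1$, $w\ge0$), $K=\{i:w_i>0\}$, $k=|K|$, $P=\{1,\dots,p\}$, and let $w^{LS}=\Sigma^{-1}\mathbf{1}_p/(\mathbf{1}_p^\top\Sigma^{-1}\mathbf{1}_p)$ be the long-short minimum variance portfolio. Then either $K=P$ and $w^{LS}=w^L$, or else $K\ne P$, $\sum_{j=1}^k\beta_j/\delta_j^2>0$, and for every $i$, $$w_i>0\iff \beta_i<\frac{\frac{1}{\sigma^2}+\sum_{j=1}^k\frac{\beta_j^2}{\delta_j^2}}{\sum_{j=1}^k\frac{\beta_j}{\delta_j^2}}.$$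
   Context: $\mathbf{1}_p$ is the all-ones vector in $\mathbb{R}^p$. *)

From mathcomp Require Import all_boot all_order all_algebra.
From mathcomp Require Import reals.
Set Implicit Arguments. Unset Strict Implicit. Unset Printing Implicit Defensive.
Import Order.TTheory GRing.Theory Num.Theory.
Local Open Scope ring_scope.

Section Defs.
Variable R : realType.

Definition ones (p : nat) : 'cV[R]_p := const_mx 1.

Definition Sigma (p : nat) (sigma2 : R) (beta delta2 : 'cV[R]_p) : 'M[R]_p :=
  sigma2 *: (beta *m beta^T) + diag_mx (delta2^T).

Definition qform (p : nat) (A : 'M[R]_p) (w : 'cV[R]_p) : R := (w^T *m A *m w) 0 0.

Definition long_only_feasible (p : nat) (w : 'cV[R]_p) : Prop :=
  (forall i, 0 <= w i 0) /\ (w^T *m ones p) 0 0 = 1.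

Definition is_long_only_mvp (p : nat) (A : 'M[R]_p) (w : 'cV[R]_p) : Prop :=
  long_only_feasible w /\ forall v, long_only_feasible v -> qform A w <= qform A v.

Definition w_LS (p : nat) (A : 'M[R]_p) : 'cV[R]_p :=
  (((ones p)^T *m invmx A *m ones p) 0 0)^-1 *: (invmx A *m ones p).
Definition supp (p : nat) (w : 'cV[R]_p) : {set 'I_p} := [set i | 0 < w i 0].
End Defs.

From mathcomp Require Import all_boot all_order all_algebra.
From mathcomp Require Import reals ring lra.
Import Order.TTheory GRing.Theory Num.Theory.
Set Implicit Arguments. Unset Strict Implicit. Unset Printing Implicit Defensive.
Local Open Scope ring_scope.

(* Moving weight from [w] towards a vertex [e_j] of the simplex cannot lower the
   variance, so [(Sigma w)_j >= w^T Sigma w =: c] for every [j], with equality on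
   the support [K] (the weights average these inequalities to an equality). For
   [Sigma = sigma2 beta beta^T + diag delta2] and [s := beta^T w] this reads
   [sigma2 beta_j s + delta2_j w_j >= c], with equality on [K]. Solving for [w_j]
   on [K] and summing [beta_j w_j] gives [s (1 + sigma2 B_K) = c A_K], where
   [A_K], [B_K] are the sums of [beta_j / delta2_j] and [beta_j^2 / delta2_j]
   over [K]. If [K] is proper, [s <= 0] would make [beta_j < 0] off [K] and
   [A_K < 0], against [\sum_j beta_j / delta2_j >= 0]; so [s > 0], and then
   [w_j > 0] iff [beta_j < c / (sigma2 s) = (1/sigma2 + B_K) / A_K], which makes
   [K] an initial segment of the sorted assets. If [K] is everything,
   [Sigma w = c 1], which characterizes the long-short portfolio. *)

Lemma card_ord_lt (n m : nat) : (m <= n)%N -> #|[set j : 'I_n | (j < m)%N]| = m.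
Proof.
move=> le_mn; rewrite -sum1_card (eq_bigl (fun j : 'I_n => (j < m)%N)) => [|j].
  by rewrite -(big_ord_widen n (fun _ => 1%N) le_mn) sum1_card card_ord.
by rewrite inE.
Qed.

Lemma downclosed_ord_lt_card (n : nat) (P : {set 'I_n}) :
  (forall i j : 'I_n, (j <= i)%N -> i \in P -> j \in P) ->
  forall i, (i \in P) = (i < #|P|)%N.
Proof.
move=> Pdown i; apply/idP/idP => [Pi | lt_iP].
  have sub : [set j : 'I_n | (j < i.+1)%N] \subset P.
    by apply/subsetP => j; rewrite inE ltnS => le_ji; apply: Pdown le_ji Pi.
  by have := subset_leq_card sub; rewrite card_ord_lt.
apply: contraLR lt_iP => notPi; rewrite -leqNgt.
have sub : P \subset [set j : 'I_n | (j < i)%N].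
  apply/subsetP => j Pj; rewrite inE ltnNge; apply: contra notPi => le_ij.
  exact: Pdown le_ij Pj.
by have := subset_leq_card sub; rewrite card_ord_lt // ltnW.
Qed.

Lemma lin_coef_ge0 (R : realFieldType) (a b : R) :
  (forall t, 0 < t <= 1 -> 0 <= a * t + b * t ^+ 2) -> 0 <= a.
Proof.
move=> ge0_near0; rewrite leNgt; apply/negP => a_lt0.
have d_gt0 : 0 < `|b| - a by have := normr_ge0 b; lra.
(* This [t] makes [a t + b t^2 <= t (a + |b| t) = a t^2 < 0]. *)
pose t := - a / (`|b| - a).
have t_gt0 : 0 < t by rewrite divr_gt0 // oppr_gt0.
have tE : t * (`|b| - a) = - a by rewrite mulfVK // gt_eqF.
have t_le1 : t <= 1 by rewrite ler_pdivrMr // mul1r; have := normr_ge0 b; lra.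
have := ge0_near0 t; rewrite t_gt0 t_le1 => /(_ isT).
have : t * (b * t) <= t * (`|b| * t) by rewrite ler_pM2l // ler_pM2r // ler_norm.
have : a * t ^+ 2 < 0 by rewrite pmulr_llt0 // exprn_gt0.
nra.
Qed.

Section QuadraticForm.
Variables (R : realType) (n : nat) (A : 'M[R]_n).
Hypothesis A_sym : A^T = A.

Lemma qformDZ (a b : R) (x y : 'cV[R]_n) :
  qform A (a *: x + b *: y) =
  a ^+ 2 * qform A x + 2 * a * b * (x^T *m A *m y) 0 0 + b ^+ 2 * qform A y.
Proof.
have yAx : y^T *m A *m x = x^T *m A *m y.
  have -> : y^T *m A *m x = (x^T *m A *m y)^T by rewrite !trmx_mul trmxK A_sym mulmxA.
  by apply/matrixP => i j; rewrite !ord1 mxE.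
have trD : (a *: x + b *: y)^T = a *: x^T + b *: y^T by rewrite linearD !linearZ.
rewrite /qform trD !mulmxDl !mulmxDr -!scalemxAl -!scalemxAr yAx !mxE; ring.
Qed.

Lemma qform_mulmx (x : 'cV[R]_n) : \sum_i x i 0 * (A *m x) i 0 = qform A x.
Proof. by rewrite /qform -mulmxA mxE; apply: eq_bigr => i _; rewrite [x^T _ _]mxE. Qed.

End QuadraticForm.

Section Ones.
Variables (R : realType) (n : nat) (x : 'cV[R]_n).

Lemma trmx_mulmx_ones : (x^T *m ones R n) 0 0 = \sum_i x i 0.
Proof. by rewrite mxE; apply: eq_bigr => i _; rewrite !mxE mulr1. Qed.

Lemma ones_trmx_mulmx : ((ones R n)^T *m x) 0 0 = \sum_i x i 0.
Proof. by rewrite mxE; apply: eq_bigr => i _; rewrite !mxE mul1r. Qed.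

End Ones.

Section Invertibility.
Variables (R : realType) (n : nat) (A : 'M[R]_n).

Lemma posdef_unitmx : (forall x, x != 0 -> 0 < qform A x) -> A \in unitmx.
Proof.
move=> A_posdef; rewrite unitmxE unitfE; apply/negP => /det0P[v v_neq0 vA0].
have := A_posdef v^T; rewrite trmx_eq0 v_neq0 => /(_ isT).
by rewrite /qform trmxK vA0 mul0mx mxE ltxx.
Qed.

Lemma w_LS_eq (w : 'cV[R]_n) (c : R) :
  A \in unitmx -> A *m w = c *: ones R n -> (w^T *m ones R n) 0 0 = 1 -> w_LS A = w.
Proof.
move=> A_unit Aw sum_w.
have invA1 : c *: (invmx A *m ones R n) = w by rewrite scalemxAr -Aw mulKmx.
have c_neq0 : c != 0.
  apply/eqP => c0; move: sum_w; rewrite -invA1 c0 scale0r trmx0 mul0mx mxE.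
  by move/eqP; rewrite eq_sym oner_eq0.
have dot1 : ((ones R n)^T *m invmx A *m ones R n) 0 0 = c^-1.
  rewrite -mulmxA -[invmx A *m _](scalerK c_neq0) invA1 -scalemxAr mxE.
  by rewrite ones_trmx_mulmx -trmx_mulmx_ones sum_w mulr1.
by rewrite /w_LS dot1 invrK -invA1.
Qed.

End Invertibility.

Section LongOnlyOptimality.
Variables (R : realType) (n : nat) (A : 'M[R]_n) (w : 'cV[R]_n).
Hypotheses (A_sym : A^T = A) (w_mvp : is_long_only_mvp A w).

Lemma long_only_mvp_ge0 i : 0 <= w i 0.
Proof. exact: w_mvp.1.1 i. Qed.

Lemma long_only_mvp_sum : \sum_i w i 0 = 1.
Proof. by rewrite -trmx_mulmx_ones w_mvp.1.2. Qed.

Lemma long_only_mvp_grad j : qform A w <= (A *m w) j 0.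
Proof.
pose e : 'cV[R]_n := delta_mx j 0.
have Aw_j : (e^T *m A *m w) 0 0 = (A *m w) j 0.
  by rewrite trmx_delta -mulmxA -rowE mxE.
have feas (t : R) : 0 < t <= 1 -> long_only_feasible (t *: e + (1 - t) *: w).
  move=> /andP[t_gt0 t_le1]; split => [i|].
    rewrite !mxE; apply: addr_ge0; apply: mulr_ge0; rewrite ?subr_ge0 //.
    - exact: ltW.
    - exact: long_only_mvp_ge0.
  rewrite (@trmx_mulmx_ones R n).
  under eq_bigr => i _ do rewrite !mxE.
  rewrite big_split /= -!mulr_sumr long_only_mvp_sum (bigD1 j) //= !eqxx big1 ?addr0.
    by rewrite mulr1 mulr1 addrC subrK.
  by move=> i /negbTE ->.
rewrite -subr_ge0 -(@pmulr_rge0 _ 2) //.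
apply: (@lin_coef_ge0 _ _ (qform A e - 2 * (A *m w) j 0 + qform A w)) => t t_01.
have := w_mvp.2 _ (feas t t_01); rewrite qformDZ // Aw_j.
lra.
Qed.

Lemma long_only_mvp_kkt i : 0 < w i 0 -> (A *m w) i 0 = qform A w.
Proof.
move=> w_i_gt0.
have terms_ge0 k : true -> 0 <= w k 0 * ((A *m w) k 0 - qform A w).
  by move=> _; rewrite mulr_ge0 ?long_only_mvp_ge0 ?subr_ge0 ?long_only_mvp_grad.
have sum_eq0 : \sum_k w k 0 * ((A *m w) k 0 - qform A w) = 0.
  under eq_bigr => k _ do rewrite mulrBr.
  by rewrite sumrB qform_mulmx -mulr_suml long_only_mvp_sum mul1r subrr.
have /eqP := psumr_eq0P terms_ge0 sum_eq0 (i := i) isT.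
by rewrite mulf_eq0 gt_eqF //= subr_eq0 => /eqP.
Qed.

End LongOnlyOptimality.

Section FactorModel.
Variables (R : realType) (p : nat) (s2 : R) (beta delta2 : 'cV[R]_p).
Hypotheses (s2_gt0 : 0 < s2) (delta2_gt0 : forall i, 0 < delta2 i 0).
Local Notation Sig := (Sigma s2 beta delta2).

Lemma Sigma_sym : Sig^T = Sig.
Proof.
by rewrite /Sigma linearD linearZ /= trmx_mul trmxK tr_diag_mx.
Qed.

Lemma mulmx_Sigma (x : 'cV[R]_p) i :
  (Sig *m x) i 0 = s2 * beta i 0 * (beta^T *m x) 0 0 + delta2 i 0 * x i 0.
Proof.
rewrite mulmxDl -scalemxAl -mulmxA mul_diag_mx !mxE big_ord1 mulrA.
by congr (_ * _ * _ + _); rewrite mxE.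
Qed.

Lemma qform_Sigma (x : 'cV[R]_p) :
  qform Sig x = s2 * (beta^T *m x) 0 0 ^+ 2 + \sum_i delta2 i 0 * x i 0 ^+ 2.
Proof.
have betaxE : (beta^T *m x) 0 0 = \sum_i x i 0 * beta i 0.
  by rewrite mxE; apply: eq_bigr => i _; rewrite mxE mulrC.
rewrite -qform_mulmx; under eq_bigr => i _ do rewrite mulmx_Sigma mulrDr.
rewrite big_split /= expr2 {3}betaxE !mulr_sumr.
by congr (_ + _); apply: eq_bigr => i _; ring.
Qed.

Lemma qform_Sigma_gt0 (x : 'cV[R]_p) : x != 0 -> 0 < qform Sig x.
Proof.
move=> x_neq0; have [i xi_neq0] : exists i, x i 0 != 0.
  apply/existsP; apply: contraR x_neq0 => /existsPn x0.
  by apply/eqP/colP => i; rewrite mxE; apply/eqP/negPn/x0.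
rewrite qform_Sigma (bigD1 i) //=.
have factor_ge0 : 0 <= s2 * (beta^T *m x) 0 0 ^+ 2 by rewrite mulr_ge0 ?sqr_ge0 ?ltW.
have term_i_gt0 : 0 < delta2 i 0 * x i 0 ^+ 2.
  by rewrite mulr_gt0 // exprn_even_gt0 //= xi_neq0 orbT.
have rest_ge0 : 0 <= \sum_(k | k != i) delta2 k 0 * x k 0 ^+ 2.
  by apply: sumr_ge0 => k _; rewrite mulr_ge0 ?sqr_ge0 ?ltW.
lra.
Qed.

Lemma Sigma_unitmx : Sig \in unitmx.
Proof. exact/posdef_unitmx/qform_Sigma_gt0. Qed.

Variable w : 'cV[R]_p.
Hypothesis w_mvp : is_long_only_mvp Sig w.

Let exposure : R := (beta^T *m w) 0 0.
Let variance := qform Sig w.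
Let A_K := \sum_(i in supp w) beta i 0 / delta2 i 0.
Let B_K := \sum_(i in supp w) beta i 0 ^+ 2 / delta2 i 0.

Lemma variance_gt0 : 0 < variance.
Proof.
apply: qform_Sigma_gt0; apply/eqP => w0; have := long_only_mvp_sum w_mvp.
by rewrite w0 big1 => [/eqP|i _]; rewrite ?mxE // eq_sym oner_eq0.
Qed.

Lemma Sigma_grad i : variance <= s2 * beta i 0 * exposure + delta2 i 0 * w i 0.
Proof. by rewrite -mulmx_Sigma long_only_mvp_grad ?Sigma_sym. Qed.

Lemma Sigma_kkt i :
  0 < w i 0 -> s2 * beta i 0 * exposure + delta2 i 0 * w i 0 = variance.
Proof. by move=> w_i_gt0; rewrite -mulmx_Sigma long_only_mvp_kkt ?Sigma_sym. Qed.

Lemma notin_supp_w_eq0 i : i \notin supp w -> w i 0 = 0.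
Proof.
rewrite inE -leNgt => w_i_le0.
by apply/le_anti; rewrite w_i_le0 (long_only_mvp_ge0 w_mvp).
Qed.

Lemma balance_denom_gt0 : 0 < 1 + s2 * B_K.
Proof.
apply: ltr_wpDr ltr01; apply: mulr_ge0; first exact: ltW.
by apply: sumr_ge0 => i _; rewrite divr_ge0 ?sqr_ge0 ?ltW.
Qed.

Lemma exposure_balance : exposure * (1 + s2 * B_K) = variance * A_K.
Proof.
have exposureK : exposure = \sum_(i in supp w) beta i 0 * w i 0.
  rewrite /exposure mxE (bigID (mem (supp w))) /= [X in _ + X]big1 ?addr0.
    by apply: eq_bigr => i _; rewrite mxE.
  by move=> i /notin_supp_w_eq0 ->; rewrite mulr0.
have w_supp i :
    i \in supp w -> w i 0 = (variance - s2 * beta i 0 * exposure) / delta2 i 0.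
  rewrite inE => /Sigma_kkt <-; field; exact: lt0r_neq0.
have : exposure = variance * A_K - s2 * exposure * B_K.
  rewrite {1}exposureK /A_K /B_K !mulr_sumr -sumrB.
  apply: eq_bigr => i /w_supp ->; field; exact: lt0r_neq0.
by move=> balance; rewrite mulrDr mulr1 {1}balance; ring.
Qed.

Lemma exposure_gt0 :
  supp w != [set: 'I_p] -> 0 <= \sum_i beta i 0 / delta2 i 0 -> 0 < exposure.
Proof.
rewrite -properT => /properP[_ [i0 _ i0_out]] sum_ge0.
have outside i : i \notin supp w -> 0 < beta i 0 * exposure.
  move=> i_out; have := Sigma_grad i.
  rewrite notin_supp_w_eq0 // mulr0 addr0 -mulrA => grad.
  by rewrite -(pmulr_rgt0 _ s2_gt0); apply: lt_le_trans variance_gt0 grad.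
rewrite ltNge; apply/negP => exposure_le0.
have exposure_lt0 : exposure < 0.
  rewrite lt_neqAle exposure_le0 andbT.
  by apply: contraTneq (outside _ i0_out) => ->; rewrite mulr0 ltxx.
have beta_out i : i \notin supp w -> beta i 0 / delta2 i 0 < 0.
  by move=> /outside; rewrite nmulr_lgt0 // pmulr_llt0 ?invr_gt0.
have A_K_lt0 : A_K < 0.
  have : exposure * (1 + s2 * B_K) < 0 by rewrite nmulr_rlt0 // balance_denom_gt0.
  by rewrite exposure_balance pmulr_rlt0 // variance_gt0.
move: sum_ge0; rewrite (bigID (mem (supp w))) /= -/A_K.
have : \sum_(i | i \notin supp w) beta i 0 / delta2 i 0 <= 0.
  by apply: sumr_le0 => i /beta_out/ltW.
lra.
Qed.

Section PositiveExposure.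
Hypothesis exposure_pos : 0 < exposure.

Lemma supp_threshold i :
  (i \in supp w) = (beta i 0 < variance / (s2 * exposure)).
Proof.
rewrite inE ltr_pdivlMr ?mulr_gt0 //; apply/idP/idP => [w_i_gt0 | ].
  rewrite -(Sigma_kkt w_i_gt0) mulrAC mulrC ltrDl mulr_gt0 //.
apply: contraLR; rewrite -!leNgt => w_i_le0.
have := Sigma_grad i; rewrite notin_supp_w_eq0 ?inE -?leNgt // mulr0 addr0.
by rewrite mulrAC mulrC.
Qed.

Lemma A_K_gt0 : 0 < A_K.
Proof.
have : 0 < exposure * (1 + s2 * B_K) by rewrite mulr_gt0 // balance_denom_gt0.
by rewrite exposure_balance pmulr_rgt0 // variance_gt0.
Qed.

Lemma threshold_supp : variance / (s2 * exposure) = (s2^-1 + B_K) / A_K.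
Proof.
have A_K_neq0 := lt0r_neq0 A_K_gt0.
rewrite -(mulfK A_K_neq0 variance) -exposure_balance.
by field; rewrite A_K_neq0 !lt0r_neq0.
Qed.

Lemma supp_ord_lt_card :
  (forall i j : 'I_p, (i <= j)%N -> beta i 0 <= beta j 0) ->
  forall i, (i \in supp w) = (i < #|supp w|)%N.
Proof.
move=> beta_mono; apply: downclosed_ord_lt_card => i j le_ji.
by rewrite !supp_threshold; apply: le_lt_trans (beta_mono _ _ le_ji).
Qed.

End PositiveExposure.

End FactorModel.

Unset Implicit Arguments.

Theorem corollary2 (R : realType) (p : nat) (sigma2 : R)
    (beta delta2 w : 'cV[R]_p) :
  (0 < p)%N ->
  0 < sigma2 ->
  beta != 0 ->
  (forall i j : 'I_p, (i <= j)%N -> beta i 0 <= beta j 0) ->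
  (forall i : 'I_p, 0 < delta2 i 0) ->
  0 <= \sum_(i < p) beta i 0 / delta2 i 0 ->
  is_long_only_mvp (Sigma sigma2 beta delta2) w ->
  (supp w = [set: 'I_p] /\
     w_LS (Sigma sigma2 beta delta2) = w)
  \/
  (supp w != [set: 'I_p] /\
   0 < \sum_(j < p | (j < #|supp w|)%N) beta j 0 / delta2 j 0 /\
   forall i : 'I_p,
     0 < w i 0 <->
     beta i 0 <
       (sigma2^-1 + \sum_(j < p | (j < #|supp w|)%N)
                      beta j 0 ^+ 2 / delta2 j 0)
       / (\sum_(j < p | (j < #|supp w|)%N) beta j 0 / delta2 j 0)).
Proof.
move=> _ s2_gt0 _ beta_mono delta2_gt0 sum_ge0 w_mvp.
have [K_full | K_proper] := eqVneq (supp w) [set: 'I_p].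
  left; split=> //.
  apply: (w_LS_eq (Sigma_unitmx beta s2_gt0 delta2_gt0) _ w_mvp.1.2).
  apply/colP => i; rewrite [RHS]mxE [ones _ _ _ _]mxE mulr1.
  apply: (long_only_mvp_kkt (Sigma_sym _ _ _) w_mvp).
  by have := in_setT i; rewrite -K_full inE.
right; have exposure_pos := exposure_gt0 s2_gt0 delta2_gt0 w_mvp K_proper sum_ge0.
have suppE := supp_ord_lt_card s2_gt0 delta2_gt0 w_mvp exposure_pos beta_mono.
have sum_supp (F : 'I_p -> R) :
    \sum_(j < p | (j < #|supp w|)%N) F j = \sum_(j in supp w) F j.
  by apply: eq_bigl => j; rewrite suppE.
rewrite !sum_supp; split=> //; split=> [|i].
  exact: (A_K_gt0 s2_gt0 delta2_gt0 w_mvp exposure_pos).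
by rewrite -threshold_supp // -supp_threshold // inE.
Qed.
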